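(* Let $1=v_1\ge v_2\ge v_3\ge v_4>0$ and, for $i\in\{1,2,3,4\}$ and $j\in\{A,B,C\}$, let $T_{ij}$ be the probability that $a_i$ wins the knockout tournament of type $j$. Consider the equations $$\frac{4T_{1A}-2T_{1B}-2T_{1C}}{5T_{1A}-T_{1B}-4T_{1C}}=\frac{4T_{2A}-2T_{2B}-2T_{2C}}{5T_{2A}-T_{2B}-4T_{2C}},\qquad \frac{4T_{3A}-2T_{3C}-2T_{3B}}{5T_{3A}-T_{3B}-4T_{3C}}=\frac{4T_{4A}-2T_{4C}-2T_{4B}}{5T_{4A}-T_{4B}-4T_{4C}}.$$ The only solutions of these equations are the weight vectors with $v_1=v_2=1$ and $v_3=v_4\le 1$.
   Context: Four teams $a_1,\dots,a_4$ with weights $v_1,\dots,v_4$. In any game between $a_i$ and $a_j$, $a_i$ wins with probability $v_i/(v_i+v_j)$, independently. A knockout tournament consists of two first-round games whose winners meet in a final. Tournament $A$: first round $a_1$ vs $a_4$ and $a_2$ vs $a_3$. Tournament $B$: $a_1$ vs $a_3$ and $a_2$ vs $a_4$. Tournament $C$: $a_1$ vs $a_2$ and $a_3$ vs $a_4$. *)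

From mathcomp Require Import all_boot all_order all_algebra.
Set Implicit Arguments. Unset Strict Implicit. Unset Printing Implicit Defensive.
Import Order.TTheory GRing.Theory Num.Theory.
Local Open Scope ring_scope.

Inductive tourn := TA | TB | TC.

Definition win {R : realFieldType} (x y : R) : R := x / (x + y).

(* Probability that team with weight vi wins a 4-team knockout where it first
   plays the team of weight vo, while the teams of weights vk and vl play
   each other in the other first-round game (all games independent). *)
Definition ko {R : realFieldType} (vi vo vk vl : R) : R :=
  win vi vo * (win vk vl * win vi vk + win vl vk * win vi vl).

(* T v1 v2 v3 v4 j i = probability that a_i wins tournament j.
   A : a1-a4, a2-a3 ;  B : a1-a3, a2-a4 ;  C : a1-a2, a3-a4.
   Teams are indexed 1..4 (other indices give 0). *)
Definition T {R : realFieldType} (v1 v2 v3 v4 : R) (j : tourn) (i : nat) : R :=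
  match j, i with
  | TA, 1%N => ko v1 v4 v2 v3
  | TA, 2%N => ko v2 v3 v1 v4
  | TA, 3%N => ko v3 v2 v1 v4
  | TA, 4%N => ko v4 v1 v2 v3
  | TB, 1%N => ko v1 v3 v2 v4
  | TB, 2%N => ko v2 v4 v1 v3
  | TB, 3%N => ko v3 v1 v2 v4
  | TB, 4%N => ko v4 v2 v1 v3
  | TC, 1%N => ko v1 v2 v3 v4
  | TC, 2%N => ko v2 v1 v3 v4
  | TC, 3%N => ko v3 v4 v1 v2
  | TC, 4%N => ko v4 v3 v1 v2
  | _, _ => 0
  end.

(* The tratio (4T_{iA} - 2T_{iB} - 2T_{iC}) / (5T_{iA} - T_{iB} - 4T_{iC})
   (field division, with the MathComp convention x / 0 = 0). *)
Definition tratio {R : realFieldType} (v1 v2 v3 v4 : R) (i : nat) : R :=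
  (4 * T v1 v2 v3 v4 TA i - 2 * T v1 v2 v3 v4 TB i - 2 * T v1 v2 v3 v4 TC i)
  / (5 * T v1 v2 v3 v4 TA i - T v1 v2 v3 v4 TB i - 4 * T v1 v2 v3 v4 TC i).

(* Write x_o = 1 / o^2 for a team of weight o.  For a fixed team a_i, the
   probability T_ij is an affine function L_i + K_i x_o of the weight o of its
   first-round opponent in format j, with K_i > 0 and L_i independent of j.
   The coefficients (4, -2, -2) and (5, -1, -4) of the ratio both sum to zero,
   so the ratio of a_i is the same expression in the x's of its three
   opponents.  Cross-multiplying, the equation for teams 3 and 4 becomes
   (x2 - x1)(x1 + x2 - x3 - x4) = 0 and the one for teams 1 and 2 becomes
   (x4 - x3)(x3 + x4 - x1 - x2) = 0; the ordering x1 <= x2 <= x3 <= x4 then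
   forces x1 = x2 and x3 = x4. *)

From mathcomp Require Import all_boot all_order all_algebra.
From mathcomp Require Import ring lra.
Import Order.TTheory GRing.Theory Num.Theory.
Local Open Scope ring_scope.

Lemma ler_invsq (R : numFieldType) (x y : R) :
  0 < x -> x <= y -> y ^- 2 <= x ^- 2.
Proof.
move=> x_gt0 xy; have y_gt0 := lt_le_trans x_gt0 xy.
by rewrite lef_pV2 ?posrE ?exprn_gt0 // ler_pXn2r // nnegrE ltW.
Qed.

Lemma invsq_inj (R : numFieldType) :
  {in Num.pos &, injective (fun x : R => x ^- 2)}.
Proof.
move=> x y x_gt0 y_gt0 /invr_inj.
by apply: pexpIrn; rewrite // nnegrE ltW.
Qed.

Section CombRatio.
Context {F : fieldType}.

Definition comb_ratio (tA tB tC : F) : F :=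
  (4 * tA - 2 * tB - 2 * tC) / (5 * tA - tB - 4 * tC).

Lemma comb_ratio_affine (L K tA tB tC : F) : K != 0 ->
  comb_ratio (L + K * tA) (L + K * tB) (L + K * tC) = comb_ratio tA tB tC.
Proof.
move=> K_neq0; rewrite /comb_ratio.
have -> : 4 * (L + K * tA) - 2 * (L + K * tB) - 2 * (L + K * tC) =
          K * (4 * tA - 2 * tB - 2 * tC) by ring.
have -> : 5 * (L + K * tA) - (L + K * tB) - 4 * (L + K * tC) =
          K * (5 * tA - tB - 4 * tC) by ring.
by rewrite -mulf_div divff // mul1r.
Qed.

Lemma comb_ratioN (tA tB tC : F) :
  comb_ratio (- tA) (- tB) (- tC) = comb_ratio tA tB tC.
Proof.
have := @comb_ratio_affine 0 (-1) tA tB tC.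
by rewrite !add0r !mulN1r oppr_eq0 oner_eq0; apply.
Qed.

End CombRatio.

Lemma comb_ratio_swap_eq (R : realFieldType) (a b c d : R) :
  [/\ a <= b, b <= c & c <= d] \/ [/\ d <= c, c <= b & b <= a] ->
  comb_ratio b a d = comb_ratio a b c -> a = b.
Proof.
(* Negating a, b, c, d reverses the chain and leaves comb_ratio unchanged. *)
move=> chains; wlog [ab bc cd] : a b c d {chains} / [/\ a <= b, b <= c & c <= d].
  move=> incr; case: chains => [chain | [dc cb ba]] E; first exact: incr chain E.
  apply: oppr_inj; apply: (incr _ _ (- c) (- d)); first by rewrite !lerN2.
  by rewrite !comb_ratioN.
rewrite /comb_ratio => E.
have [denr_0 | denr_neq0] := eqVneq (5 * a - b - 4 * c) 0; first by lra.
have [denl_0 | denl_neq0] := eqVneq (5 * b - a - 4 * d) 0.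
  move: E; rewrite denl_0 invr0 mulr0 => /esym/eqP.
  by rewrite mulf_eq0 invr_eq0 (negPf denr_neq0) orbF => /eqP; lra.
move/eqP: E; rewrite eqr_div // => /eqP cross.
have factor : (4 * b - 2 * a - 2 * d) * (5 * a - b - 4 * c)
            - (4 * a - 2 * b - 2 * c) * (5 * b - a - 4 * d)
            = 6 * ((b - a) * (a + b - c - d)) by ring.
move: factor; rewrite cross subrr => /esym/eqP.
by rewrite !mulf_eq0 pnatr_eq0 /= => /orP[|] /eqP; lra.
Qed.

Section Knockout.
Context {R : realFieldType}.
Implicit Types a p q r : R.

(* With y = 1/p, 1/q, 1/r, ko a p q r = a^2 / ((a+p)(a+q)(a+r)) * (a + 2 / (y_q + y_r))
   and 1 / (y_q + y_r) = (y_p^2 + y_p y_q + y_p y_r + y_q y_r)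
                         / ((y_p + y_q)(y_p + y_r)(y_q + y_r));
   clearing the inverses gives a slope and an intercept symmetric in p, q, r. *)
Definition ko_slope a p q r : R :=
  2 * a ^+ 2 * (p * q * r) ^+ 2 /
  ((a + p) * (a + q) * (a + r) * ((p + q) * (p + r) * (q + r))).

Definition ko_intercept a p q r : R :=
  a ^+ 2 / ((a + p) * (a + q) * (a + r)) *
  (a + 2 * (p * q * r) * (p + q + r) / ((p + q) * (p + r) * (q + r))).

Lemma ko_slope_gt0 a p q r :
  0 < a -> 0 < p -> 0 < q -> 0 < r -> 0 < ko_slope a p q r.
Proof.
move=> a_gt0 p_gt0 q_gt0 r_gt0.
by rewrite divr_gt0 ?mulr_gt0 ?exprn_gt0 ?addr_gt0.
Qed.

Lemma ko_affine_invsq a p q r : 0 < a -> 0 < p -> 0 < q -> 0 < r ->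
  ko a p q r = ko_intercept a p q r + ko_slope a p q r * p ^- 2.
Proof.
move=> a_gt0 p_gt0 q_gt0 r_gt0; rewrite /ko /win /ko_intercept /ko_slope.
by field; rewrite !gt_eqF ?addr_gt0.
Qed.

Definition opponent (v1 v2 v3 v4 : R) (j : tourn) (i : nat) : R :=
  match j, i with
  | TA, 1%N => v4 | TA, 2%N => v3 | TA, 3%N => v2 | TA, 4%N => v1
  | TB, 1%N => v3 | TB, 2%N => v4 | TB, 3%N => v1 | TB, 4%N => v2
  | TC, 1%N => v2 | TC, 2%N => v1 | TC, 3%N => v4 | TC, 4%N => v3
  | _, _ => 0
  end.

Lemma T_affine_invsq (v1 v2 v3 v4 : R) (i : nat) :
  0 < v1 -> 0 < v2 -> 0 < v3 -> 0 < v4 -> (0 < i <= 4)%N ->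
  exists2 K, 0 < K & exists L, forall j,
    T v1 v2 v3 v4 j i = L + K * opponent v1 v2 v3 v4 j i ^- 2.
Proof.
move=> v1_gt0 v2_gt0 v3_gt0 v4_gt0.
(* ko_slope and ko_intercept are symmetric in p, q, r, so one witness serves all formats. *)
case: i => [|[|[|[|[|i]]]]] // _;
  [exists (ko_slope v1 v4 v3 v2); last exists (ko_intercept v1 v4 v3 v2)
  | exists (ko_slope v2 v3 v4 v1); last exists (ko_intercept v2 v3 v4 v1)
  | exists (ko_slope v3 v2 v1 v4); last exists (ko_intercept v3 v2 v1 v4)
  | exists (ko_slope v4 v1 v2 v3); last exists (ko_intercept v4 v1 v2 v3)];
  rewrite ?ko_slope_gt0 // => -[];
  rewrite /= ko_affine_invsq //; congr (_ + _ * _);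
  rewrite /ko_intercept /ko_slope; congr (_ / _ * (_ + _ / _)) || congr (_ / _); ring.
Qed.

Lemma tratio_invsq (v1 v2 v3 v4 : R) (i : nat) :
  0 < v1 -> 0 < v2 -> 0 < v3 -> 0 < v4 -> (0 < i <= 4)%N ->
  tratio v1 v2 v3 v4 i =
  comb_ratio (opponent v1 v2 v3 v4 TA i ^- 2) (opponent v1 v2 v3 v4 TB i ^- 2)
             (opponent v1 v2 v3 v4 TC i ^- 2).
Proof.
move=> v1_gt0 v2_gt0 v3_gt0 v4_gt0 i_range.
have [K K_gt0 [L TE]] :=
  T_affine_invsq _ _ _ _ _ v1_gt0 v2_gt0 v3_gt0 v4_gt0 i_range.
by rewrite -(comb_ratio_affine L K _ _ _ (lt0r_neq0 K_gt0)) -!TE.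
Qed.

End Knockout.

Theorem theorem9 (R : realFieldType) (v1 v2 v3 v4 : R) :
  v1 = 1 -> v2 <= v1 -> v3 <= v2 -> v4 <= v3 -> 0 < v4 ->
  (tratio v1 v2 v3 v4 1%N = tratio v1 v2 v3 v4 2%N /\
   tratio v1 v2 v3 v4 3%N = tratio v1 v2 v3 v4 4%N)
  <-> (v2 = 1 /\ v3 = v4).
Proof.
move=> -> v21 v32 v43 v4_gt0.
have v3_gt0 := lt_le_trans v4_gt0 v43; have v2_gt0 := lt_le_trans v3_gt0 v32.
split=> [[E12 E34] | [-> ->] //].
rewrite !tratio_invsq ?ltr01 //= in E12 E34.
have chain : [/\ 1 ^- 2 <= v2 ^- 2, v2 ^- 2 <= v3 ^- 2 & v3 ^- 2 <= v4 ^- 2].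
  by split; apply: ler_invsq.
split; apply: invsq_inj; rewrite ?posrE ?ltr01 //=.
- exact: esym (comb_ratio_swap_eq _ _ _ _ _ (or_introl chain) E34).
- exact: esym (comb_ratio_swap_eq _ _ _ _ _ (or_intror chain) (esym E12)).
Qed.
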